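(* Let $\mathbb{U}$ be the Urysohn space and $\mathcal{K}(\mathbb{U})$ the standard Borel space (with the Effros Borel structure) of closed subsets of $\mathbb{U}$. The set $\mathcal{ALC}\subseteq\mathcal{K}(\mathbb{U})$ of all closed subsets of $\mathbb{U}$ that are almost locally compact is a Borel subset of $\mathcal{K}(\mathbb{U})$.
   Context: A topological space is almost locally compact if it contains a dense locally compact subspace. *)

From HB Require Import structures.
From mathcomp Require Import all_boot all_order all_algebra.
From mathcomp Require Import all_classical all_reals all_analysis.
Set Implicit Arguments. Unset Strict Implicit. Unset Printing Implicit Defensive.
Import Order.TTheory GRing.Theory Num.Theory.
Local Open Scope classical_set_scope.
Local Open Scope ring_scope.

Definition separable_space {R : realType} (M : metricType R) : Prop :=
  exists D : set M, countable D /\ dense D.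

Definition complete_space {R : realType} (M : metricType R) : Prop :=
  forall F : set_system M, ProperFilter F -> cauchy F -> exists x : M, F --> x.

Definition isometric {R : realType} (M N : metricType R) (f : M -> N) : Prop :=
  forall x y : M, mdist (f x) (f y) = mdist x y.

Definition is_Urysohn_space {R : realType} (U : metricType R) : Prop :=
  [/\ complete_space U, separable_space U,
      (forall M : metricType R, separable_space M ->
         exists f : M -> U, isometric f) &
      (forall (A : set U) (f : U -> U), finite_set A ->
         (forall x y, A x -> A y -> mdist (f x) (f y) = mdist x y) ->
         exists g : U -> U, [/\ bijective g, isometric g &
                                forall x, A x -> g x = f x])].

Definition locally_compact_subspace {T : topologicalType} (A : set T) : Prop :=
  @locally_compact (subspace A) A.

Definition almost_locally_compact {T : topologicalType} (F : set T) : Prop :=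
  exists D : set T, [/\ D `<=` F, F `<=` closure D & locally_compact_subspace D].

Definition closed_sets (T : topologicalType) : set (set T) := [set F | closed F].

Definition effros_generators (T : topologicalType) : set (set (set T)) :=
  [set [set F | closed F /\ F `&` V !=set0] | V in [set V : set T | open V]].

Definition effros_borel (T : topologicalType) : set (set (set T)) :=
  <<s @closed_sets T, @effros_generators T >>.

Definition ALC (T : topologicalType) : set (set T) :=
  [set F | closed F /\ almost_locally_compact F].

From HB Require Import structures.
From mathcomp Require Import all_boot all_order all_algebra.
From mathcomp Require Import all_classical all_reals all_analysis.
Set Implicit Arguments. Unset Strict Implicit. Unset Printing Implicit Defensive.
Import Order.TTheory GRing.Theory Num.Theory.
Local Open Scope classical_set_scope.
Local Open Scope ring_scope.

(* Fix a dense sequence (e i) and the basic balls ball (e n) (1/(m+1)).  In a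
   complete space a closed F is almost locally compact iff every basic ball
   meeting F contains a basic ball B meeting F such that F `&` B is totally
   bounded, witnessed for each radius 1/(k+1) by finitely many closed balls
   around e 0, ..., e (N-1).  Indeed the points of F having such a B around
   them form a dense locally compact subset of F; conversely, if D is dense in
   F and x in D has a compact neighbourhood C in D, then F `&` B lies in the
   closure of the compact set C for a small basic B around x.  Each clause
   "F meets the open set V" is an Effros generator, so the criterion exhibits
   ALC as a countable Boolean combination of generators. *)

Section sigma_algebra_on_domain.
Context {T : Type} (D : set T) (G : set (set T)).
Hypothesis G_sub : forall A, G A -> A `<=` D.

Lemma sigma_algebra_sub_domain A : <<s D, G >> A -> A `<=` D.
Proof.
move=> GA; suff : [set A | A `<=` D] A by [].
apply: smallest_sub GA => //; split => [//|B _|B BD]; first exact: subDsetl.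
by apply: bigcup_sub => i _; exact: BD.
Qed.

Lemma sigma_algebra_bigcap_nat (A : (set T)^nat) :
  (forall i, <<s D, G >> (A i)) -> <<s D, G >> (\bigcap_i A i).
Proof.
move=> GA; have -> : \bigcap_i A i = D `\` \bigcup_i (D `\` A i).
  rewrite -bigcupDr; last by exists 0%N.
  apply: eq_bigcapr => i _.
  by rewrite setDD setIidr //; exact: sigma_algebra_sub_domain.
apply: sigma_algebraCD; apply: sigma_algebra_bigcup => i.
exact: sigma_algebraCD.
Qed.

Lemma sigma_algebra_setU A B :
  <<s D, G >> A -> <<s D, G >> B -> <<s D, G >> (A `|` B).
Proof.
move=> GA GB; rewrite -bigcup2E.
by apply: sigma_algebra_bigcup => -[|[|i]] //=; exact: sigma_algebra0.
Qed.

Lemma sigma_algebra_setI A B :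
  <<s D, G >> A -> <<s D, G >> B -> <<s D, G >> (A `&` B).
Proof.
have [_ _ _ GI] := (sigma_algebraP sigma_algebra_sub_domain).1
  (smallest_sigma_algebra D G).
exact: GI.
Qed.

End sigma_algebra_on_domain.

Section effros_borel.
Variable T : topologicalType.

Definition hits (V : set T) : set (set T) :=
  [set F | closed F /\ F `&` V !=set0].

Lemma effros_generators_closed A :
  @effros_generators T A -> A `<=` @closed_sets T.
Proof. by case=> V _ <- F []. Qed.

Lemma effros_borel_hits V : open V -> effros_borel (hits V).
Proof. by move=> V_open; apply: sub_sigma_algebra; exists V. Qed.

End effros_borel.

Lemma within_subspace_nbhsP {T : topologicalType} (A K : set T) (x : T) : A x ->
  within A (nbhs (x : subspace A)) K <->
  exists2 V, nbhs x V & K `&` A = V `&` A.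
Proof.
move=> Ax; rewrite withinE; split.
  by move=> [V /(nbhs_subspace_ex _ Ax) [W Wx VW] KV]; exists W; rewrite // KV.
by move=> [V Vx KV]; exists K => //; apply/(nbhs_subspace_ex _ Ax); exists V.
Qed.

Lemma closureI_open {T : topologicalType} (A W : set T) :
  open W -> closure A `&` W `<=` closure (A `&` W).
Proof.
move=> W_open x [Ax Wx] B Bx.
have W_nbhs : nbhs x W by exact: open_nbhs_nbhs.
by have [z [Az [Wz Bz]]] := Ax (W `&` B) (filterI W_nbhs Bx); exists z.
Qed.

Lemma compact_bigcup_II {T : topologicalType} (K : set T) (f : nat -> set T) :
  compact K -> (forall i, open (f i)) -> K `<=` \bigcup_i f i ->
  exists n, K `<=` \bigcup_(i < n) f i.
Proof.
move=> /compact_near_coveringP K_cover f_open Kf.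
have : \forall n \near \oo, K `<=` \bigcup_(i < n) f i.
  apply: K_cover => x /Kf [i _ fx].
  exists (f i, [set n | (i < n)%N]); first split => //=.
  - exact: open_nbhs_nbhs.
  - by exists i.+1.
  by move=> [y n] /= [fy ltin]; exists i.
by move=> [N _ /(_ N (leqnn N))]; exists N.
Qed.

Lemma ultra_bigcup_II {T : Type} (G : set_system T) (f : nat -> set T) n :
  UltraFilter G -> G (\bigcup_(i < n) f i) -> exists2 i, (i < n)%N & G (f i).
Proof.
move=> G_ultra; elim: n => [|n IHn].
  by rewrite II0 bigcup_set0 => /filter_ex [].
rewrite IIS bigcup_setU bigcup_set1 => Gn.
have [Gfn|GCfn] := in_ultra_setVsetC (f n) G_ultra; first by exists n.
have [|i ltin Gi] := IHn; last by exists i => //; exact: ltnW.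
by apply: filterS (filterI Gn GCfn) => y [[]].
Qed.

Lemma metric_ball_open {R : realType} {U : metricType R} (x : U) (r : R) :
  open (ball x r).
Proof.
rewrite openE => y; rewrite ballEmdist /= => xy; rewrite /interior -nbhs_ballE.
exists (r - mdist x y) => /=; first by rewrite subr_gt0.
move=> z; rewrite !ballEmdist /= => yz.
by rewrite (le_lt_trans (metric_triangle x y z)) // -ltrBrDl.
Qed.

Section dense_sequence.
Variables (R : realType) (U : metricType R) (e : nat -> U).
Hypothesis e_dense : dense (range e).

Definition radius (k : nat) : R := k.+1%:R^-1.

Lemma radius_gt0 k : 0 < radius k.
Proof. by rewrite invr_gt0. Qed.

Lemma exists_radius_lt (eps : R) : 0 < eps -> exists k, radius k < eps.
Proof.
move=> eps_gt0.
have [N _ /(_ N (leqnn N))] := near_infty_natSinv_lt (PosNum eps_gt0).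
by exists N.
Qed.

Lemma dense_range_ball (x : U) (r : R) : 0 < r -> exists i, ball (e i) r x.
Proof.
move=> r_gt0.
have [y [xy [i _ iy]]] :=
  e_dense (ex_intro _ x (ballxx x r_gt0)) (metric_ball_open x r).
by exists i; rewrite iy; exact: ball_sym.
Qed.

Definition net_ball (n m : nat) : set U := ball (e n) (radius m).

Lemma net_ball_open n m : open (net_ball n m).
Proof. exact: metric_ball_open. Qed.

Lemma nbhs_net_ball (x : U) (O : set U) :
  nbhs x O -> exists n m, net_ball n m x /\ net_ball n m `<=` O.
Proof.
move=> /nbhs_ballP [eps eps_gt0 epsO].
have [m rm] := exists_radius_lt (divr_gt0 eps_gt0 (ltr0n R 2)).
have [n nx] := dense_range_ball x (radius_gt0 m).
exists n, m; split => // y ny; apply: epsO.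
apply: (@le_ball _ _ _ (radius m + radius m)).
  by rewrite [leRHS](splitr eps) ltW // ltrD.
exact: ball_triangle (ball_sym nx) ny.
Qed.

Definition net_cover (n k : nat) : set U :=
  \bigcup_(i < n) closed_ball (e i) (radius k).

Lemma net_cover_closed n k : closed (net_cover n k).
Proof.
apply: closed_bigcup => [|i _]; first exact: finite_II.
exact: closed_ball_closed.
Qed.

Definition net_bounded (A : set U) := forall k, exists n, A `<=` net_cover n k.

Lemma compact_net_bounded (K : set U) : compact K -> net_bounded K.
Proof.
move=> K_compact k.
have [|n Kn] := compact_bigcup_II K_compact (fun i => net_ball_open i k).
  by move=> x _; have [i ix] := dense_range_ball x (radius_gt0 k); exists i.
exists n; apply: subset_trans Kn _.
by apply: subset_bigcup => i _; exact: subset_closed_ball.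
Qed.

Lemma net_bounded_compact (K : set U) :
  complete_space U -> closed K -> net_bounded K -> compact K.
Proof.
move=> U_complete K_closed K_bounded; rewrite compact_ultra => G G_ultra GK.
have G_cauchy : cauchy G.
  apply: cauchy_exP => eps eps_gt0.
  have [k rk] := exists_radius_lt (divr_gt0 eps_gt0 (ltr0n R 2)).
  have [n Kn] := K_bounded k.
  have [i _ Gi] := ultra_bigcup_II G_ultra (filterS Kn GK).
  exists (e i); apply: filterS Gi.
  apply: subset_trans _ (subset_closure_half eps_gt0).
  exact/closureS/le_ball/ltW.
have [x Gx] := U_complete G _ G_cauchy.
by exists x; split => //; exact: (@closed_cvg _ _ G _ id K K_closed _ x).
Qed.

Definition densely_net_bounded (F : set U) := forall n m,
  F `&` net_ball n m !=set0 -> exists n' m',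
    F `&` (net_ball n m `&` net_ball n' m') !=set0 /\
    net_bounded (F `&` net_ball n' m').

Lemma almost_locally_compact_densely_net_bounded (F : set U) :
  almost_locally_compact F -> densely_net_bounded F.
Proof.
move=> [D [DF FD D_lc]] n m [y [Fy ny]].
have [x [Dx nx]] : D `&` net_ball n m !=set0.
  by apply: FD y Fy _ (open_nbhs_nbhs (conj (net_ball_open n m) ny)).
have [K /(within_subspace_nbhsP _ Dx) [V Vx KV] [K_compact _]] := D_lc x Dx.
have VD_compact : compact (V `&` D : set U).
  rewrite -KV; apply/compact_subspaceIP/compact_closedI => //.
  exact: closed_subspaceT.
have [n' [m' [n'x n'V]]] : exists n' m', net_ball n' m' x /\
    net_ball n' m' `<=` V `&` net_ball n m.
  apply: nbhs_net_ball; apply: filterI => //.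
  exact: open_nbhs_nbhs (conj (net_ball_open n m) nx).
exists n', m'; split; first by exists x; split; [exact: DF | split].
have FVD : F `&` net_ball n' m' `<=` V `&` D.
  have VD_closed := compact_closed (@metric_hausdorff R U) VD_compact.
  rewrite (closure_id (V `&` D)).1 //; apply: subset_trans (setSI FD) _.
  apply: subset_trans (closureI_open (net_ball_open n' m')) _.
  by apply: closureS => w [Dw /n'V [Vw _]].
move=> k; have [N VDN] := compact_net_bounded VD_compact k.
by exists N; exact: subset_trans VDN.
Qed.

Lemma densely_net_bounded_almost_locally_compact (F : set U) :
  complete_space U -> closed F -> densely_net_bounded F ->
  almost_locally_compact F.
Proof.
move=> U_complete F_closed F_dense.
pose D := [set x | F x /\
  exists n m, net_ball n m x /\ net_bounded (F `&` net_ball n m)].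
exists D; split.
- by move=> x [].
- move=> y Fy O /nbhs_net_ball [n [m [ny nO]]].
  have [n' [m' [[x [Fx [nx n'x]]] n'_bounded]]] :=
    F_dense n m (ex_intro _ y (conj Fy ny)).
  by exists x; split; [split => //; exists n', m' | exact: nO].
- move=> x [Fx [n [m [nx n_bounded]]]].
  have /nbhs_ballP [eps eps_gt0 eps_n] : nbhs (x : U) (net_ball n m).
    exact: open_nbhs_nbhs (conj (net_ball_open n m) nx).
  pose K := F `&` closed_ball (x : U) (eps / 2).
  have Kn : K `<=` F `&` net_ball n m.
    by move=> z [Fz xz]; split => //; apply/eps_n/(subset_closure_half eps_gt0).
  have KD : K `<=` D by move=> z /Kn [Fz nz]; split => //; exists n, m.
  have K_closed : closed K by apply: closedI => //; exact: closed_ball_closed.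
  have K_compact : compact K.
    apply: net_bounded_compact => // k; have [N nN] := n_bounded k.
    by exists N; exact: subset_trans nN.
  have Dx : D x by split => //; exists n, m.
  exists K.
    apply/(@within_subspace_nbhsP U _ _ _ Dx).
    exists (closed_ball (x : U) (eps / 2)).
      apply: filterS (@subset_closed_ball _ _ _ _) _.
      by apply: nbhsx_ballx; rewrite divr_gt0.
    apply/seteqP; split => [z [[_ xz] Dz] | z [xz Dz]] //.
    by split => //; split => //; case: Dz.
  split; last exact: closed_subspaceW.
  by rewrite -(setIidl KD); apply/compact_subspaceIP; rewrite setIidl.
Qed.

Lemma densely_net_boundedE : [set F | closed F /\ densely_net_bounded F] =
  \bigcap_n \bigcap_m ((@closed_sets U `\` hits (net_ball n m)) `|`
    \bigcup_n' \bigcup_m' (hits (net_ball n m `&` net_ball n' m') `&`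
      \bigcap_k \bigcup_N
        (@closed_sets U `\` hits (net_ball n' m' `\` net_cover N k)))).
Proof.
apply/seteqP; split => F.
- move=> [F_closed F_dense] n _ m _.
  have [Fn|nFn] := pselect (F `&` net_ball n m !=set0).
    2: by left; split => // -[].
  right; have [n' [m' [Fnn' n'_bounded]]] := F_dense n m Fn.
  exists n' => //; exists m' => //; split => // k _.
  have [N n'N] := n'_bounded k; exists N => //.
  split => // -[_ [z [Fz [n'z Nz]]]].
  by apply: Nz; exact: n'N.
- move=> FP; have F_closed : closed F.
    by case: (FP 0%N I 0%N I) => [[]|[n' _ [m' _ [[]]]]].
  split => // n m Fn.
  case: (FP n I m I) => [[_ []]//|[n' _ [m' _ [[_ Fnn'] n'N]]]].
  exists n', m'; split => // k; have [N _ [_ FN]] := n'N k I.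
  exists N => z [Fz n'z]; apply: contrapT => Nz.
  by apply: FN; split => //; exists z.
Qed.

Lemma effros_borel_densely_net_bounded :
  effros_borel [set F | closed F /\ densely_net_bounded F].
Proof.
have G_sub := @effros_generators_closed U.
rewrite densely_net_boundedE.
apply: sigma_algebra_bigcap_nat => // n.
apply: sigma_algebra_bigcap_nat => // m.
apply: sigma_algebra_setU.
  by apply: sigma_algebraCD; apply: effros_borel_hits; exact: net_ball_open.
apply: sigma_algebra_bigcup => n'; apply: sigma_algebra_bigcup => m'.
apply: sigma_algebra_setI => //.
  by apply: effros_borel_hits; apply: openI; exact: net_ball_open.
apply: sigma_algebra_bigcap_nat => // k; apply: sigma_algebra_bigcup => N.
apply: sigma_algebraCD; apply: effros_borel_hits; apply: openI.
  exact: net_ball_open.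
exact/closed_openC/net_cover_closed.
Qed.

End dense_sequence.

Lemma countable_dense_range {T : topologicalType} (x0 : T) (D : set T) :
  countable D -> dense D -> exists e : nat -> T, dense (range e).
Proof.
move=> /countable_injP [f f_inj] D_dense.
exists (pinv_ (fun=> x0) D f) => O O0 O_open.
have [z [Oz Dz]] := D_dense O O0 O_open.
by exists z; split => //; exists (f z) => //; rewrite pinvKV // inE.
Qed.

Lemma almost_locally_compact0 {T : topologicalType} :
  almost_locally_compact (@set0 T).
Proof. by exists set0; split => // x. Qed.

Theorem proposition3p7 (R : realType) (U : metricType R) :
  is_Urysohn_space U -> @effros_borel U (@ALC U).
Proof.
move=> [U_complete [D [D_countable D_dense]] _ _].
have [[x0 _]|U0] := pselect (exists x : U, True); last first.
  have -> : @ALC U = @closed_sets U `\` set0.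
    apply/seteqP; split => F [F_closed _]; split => //.
    suff -> : F = set0 by exact: almost_locally_compact0.
    by apply/seteqP; split => // x _; apply: U0; exists x.
  by apply: sigma_algebraCD; exact: sigma_algebra0.
have [e e_dense] := countable_dense_range x0 D_countable D_dense.
have -> : @ALC U = [set F | closed F /\ densely_net_bounded e F].
  apply/seteqP; split => F [F_closed F_P]; split => //.
    exact: almost_locally_compact_densely_net_bounded e_dense _ F_P.
  exact: densely_net_bounded_almost_locally_compact e_dense _ U_complete _ F_P.
exact: effros_borel_densely_net_bounded.
Qed.
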